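(* Let $d\ge 2$, let $\mathbf f_t(z)=\frac{z^d+t}{z}\in\overline{\mathbb Q}(t)(z)$, and let $\mathbf c=\mathbf A/\mathbf B\in\overline{\mathbb Q}(t)$ with $\mathbf A,\mathbf B\in\overline{\mathbb Q}[t]$ coprime. If $\mathbf c(0)\ne 0$, then $$\widehat h_{\mathbf f}(\mathbf c)=\frac{\deg(\mathbf f_t(\mathbf c(t)))}{d}=\frac{\deg(\mathbf f_t^2(\mathbf c(t)))}{d^2}.$$
   Context: For a rational function $g\in\overline{\mathbb Q}(t)$, $\deg(g)$ is the maximum of the degrees of numerator and denominator in lowest terms. $\widehat h_{\mathbf f}(\mathbf c)=\lim_{n\to\infty}\deg(\mathbf f_t^n(\mathbf c(t)))/d^n$, where $\mathbf f_t^n$ denotes the $n$-th iterate of $z\mapsto \mathbf f_t(z)$. The condition $\mathbf c(0)\neq 0$ means $\mathbf A(0)\ne 0$. *)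

From HB Require Import structures.
From mathcomp Require Import all_boot all_order all_algebra all_field.
From mathcomp Require Import generic_quotient fraction.
From Stdlib Require Import Reals.
Set Implicit Arguments. Unset Strict Implicit. Unset Printing Implicit Defensive.
Import GRing.Theory.
Local Open Scope ring_scope.

(* Rational functions in t over Qbar (= algC). *)
Notation ratfun := {fraction {poly algC}}.

Definition ratdeg (g : ratfun) : nat :=
  let r := repr g in
  let p := \n_r in let q := \d_r in
  let g0 := gcdp p q in
  maxn (size (p %/ g0)).-1 (size (q %/ g0)).-1.

Definition polyF (p : {poly algC}) : ratfun := @FracField.tofrac _ p.

Definition tvar : ratfun := polyF 'X.

Definition fmap (d : nat) (z : ratfun) : ratfun := (z ^+ d + tvar) / z.

Definition hseq (d : nat) (c : ratfun) (n : nat) : R :=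
  (INR (ratdeg (iter n (fmap d) c)) / INR (d ^ n))%R.

From HB Require Import structures.
From mathcomp Require Import all_boot all_order all_algebra all_field.
From mathcomp Require Import generic_quotient fraction.
From mathcomp Require Import zify ring.
Set Implicit Arguments. Unset Strict Implicit. Unset Printing Implicit Defensive.
Import GRing.Theory.
Local Open Scope ring_scope.

(* Writing [c = A/B] in lowest terms, [f_t(A/B) = A1/B1] with
   [A1 = A^d + t B^d] and [B1 = A B^(d-1)]; this pair is again coprime with
   [A1(0) = A(0)^d <> 0], so iterating gives lowest-terms representations
   [A_n/B_n] of [f^n(c)]. Their degrees [a_n, b_n] obey
   [a_(n+1) = max (d a_n) (d b_n + 1)] (the two terms of [A_(n+1)] have
   degrees of distinct residues mod [d]) and [b_(n+1) = a_n + (d-1) b_n].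
   Hence [b_1 < a_1], and from then on [b_n < a_n] and [a_(n+1) = d a_n]:
   the normalized degree [deg f^n(c) / d^n] is constant from [n = 1]. *)

Lemma eqp_cross_coprime (F : fieldType) (p q r s : {poly F}) :
  coprimep p q -> coprimep r s -> p * s = r * q -> (p %= r) && (q %= s).
Proof.
move=> cpq crs ps_rq; apply/andP; split; apply/andP; split.
- by rewrite -(Gauss_dvdpl _ cpq) -ps_rq dvdp_mulIl.
- by rewrite -(Gauss_dvdpl _ crs) ps_rq dvdp_mulIl.
- rewrite coprimep_sym in cpq.
  by rewrite -(Gauss_dvdpr _ cpq) ps_rq dvdp_mulIr.
- rewrite coprimep_sym in crs.
  by rewrite -(Gauss_dvdpr _ crs) -ps_rq dvdp_mulIr.
Qed.

Lemma numden_repr (x : ratfun) :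
  x = polyF \n_(repr x) / polyF \d_(repr x).
Proof.
have d0 : polyF \d_(repr x) != 0 by rewrite tofrac_eq0 denom_ratioP.
apply: (mulIf d0); rewrite divfK // /polyF -{1}[x]reprK !piE.
apply/eqmodP; rewrite /= FracField.equivfE /FracField.mulf.
by rewrite !numden_Ratio ?mulf_neq0 ?oner_eq0 ?denom_ratioP // !mulr1 mulrC.
Qed.

Lemma ratdeg_frac (A B : {poly algC}) : B != 0 -> coprimep A B ->
  ratdeg (polyF A / polyF B) = maxn (size A).-1 (size B).-1.
Proof.
move=> B0 cAB; rewrite /ratdeg.
set x := polyF A / polyF B; set n := \n_(repr x); set m := \d_(repr x).
have m0 : m != 0 by apply: denom_ratioP.
set g := gcdp n m.
have g0 : g != 0 by rewrite gcdp_eq0 negb_and m0 orbT.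
have nB_Am : n * B = A * m.
  apply/eqP; rewrite -tofrac_eq !tofracM -eqr_div ?tofrac_eq0 //.
  by rewrite -(numden_repr x).
have reduced_cross : n %/ g * B = A * (m %/ g).
  apply: (mulIf g0); rewrite mulrAC divpK ?dvdp_gcdl // -mulrA divpK //.
  exact: dvdp_gcdr.
have cnm : coprimep (n %/ g) (m %/ g) by rewrite coprimep_div_gcd ?m0 ?orbT.
have /andP[/eqp_size -> /eqp_size ->] :=
  eqp_cross_coprime cnm cAB reduced_cross.
by [].
Qed.

Section PairStep.
Variables (F : fieldType) (d : nat).

Definition fpair (pq : {poly F} * {poly F}) : {poly F} * {poly F} :=
  (pq.1 ^+ d + 'X * pq.2 ^+ d, pq.1 * pq.2 ^+ d.-1).

Definition reduced_pair (pq : {poly F} * {poly F}) : bool :=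
  [&& pq.2 != 0, coprimep pq.1 pq.2 & pq.1.[0] != 0].

Lemma reduced_pair_neq0 pq : reduced_pair pq -> pq.1 != 0 /\ pq.2 != 0.
Proof.
case/and3P=> q0 _ p00; split=> //.
by apply: contraNneq p00 => ->; rewrite horner0.
Qed.

Lemma fmap_step_div (a b t : F) : (0 < d)%nat -> a != 0 -> b != 0 ->
  ((a / b) ^+ d + t) / (a / b) = (a ^+ d + t * b ^+ d) / (a * b ^+ d.-1).
Proof.
case: d => // e _ a0 b0; rewrite expr_div_n !exprS /=.
by field; rewrite a0 b0 expf_neq0.
Qed.

Lemma reduced_fpair pq :
  (0 < d)%nat -> reduced_pair pq -> reduced_pair (fpair pq).
Proof.
rewrite /fpair; case: pq => p q /=; case: d => // e _ red.
have [p0 q0] := reduced_pair_neq0 red; case/and3P: red => _ cpq p00.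
rewrite /reduced_pair /=; apply/and3P; split.
- by rewrite mulf_neq0 ?expf_neq0.
- rewrite coprimepMr; apply/andP; split.
    rewrite coprimep_sym exprSr coprimep_addl_mul coprimepMr coprimepX.
    by rewrite rootE p00 coprimep_expr.
  apply: coprimep_expr.
  rewrite coprimep_sym addrC exprSr mulrA coprimep_addl_mul.
  by apply: coprimep_expr; rewrite coprimep_sym.
- by rewrite !hornerE expf_neq0.
Qed.

Lemma size_fpair (pq : {poly F} * {poly F}) :
  (2 <= d)%nat -> pq.1 != 0 -> pq.2 != 0 ->
  (size (fpair pq).1).-1 = maxn ((size pq.1).-1 * d) ((size pq.2).-1 * d).+1 /\
  (size (fpair pq).2).-1 = ((size pq.1).-1 + (size pq.2).-1 * d.-1)%nat.
Proof.
case: pq => p q d2 /= p0 q0; rewrite /fpair /=.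
have size_X (r : {poly F}) n : r != 0 -> size (r ^+ n) = ((size r).-1 * n).+1.
  by move=> r0; rewrite -size_exp prednK // size_poly_gt0 expf_neq0.
set a := (size p).-1; set b := (size q).-1.
split; last first.
  rewrite size_mul ?expf_neq0 // size_X // -[size p]prednK ?size_poly_gt0 //.
  by rewrite addSn addnS.
have sp : size (p ^+ d) = (a * d).+1 by rewrite size_X.
have sq : size ('X * q ^+ d) = (b * d).+2.
  by rewrite mulrC size_mulX ?expf_neq0 // size_X.
have ne : (a * d != (b * d).+1)%nat.
  by apply/eqP=> /(congr1 (modn^~ d)); rewrite modnMl -addn1 modnMDl modn_small.
have [lt|ge] := ltnP (a * d) (b * d).+1.
  by rewrite addrC size_polyDl ?sp ?sq //; apply/esym/maxn_idPr/ltnW.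
by rewrite size_polyDl ?sp ?sq //; lia.
Qed.

Lemma size_fpair_lt (pq : {poly F} * {poly F}) :
  (2 <= d)%nat -> pq.1 != 0 -> pq.2 != 0 ->
  ((size (fpair pq).2).-1 < (size (fpair pq).1).-1)%nat.
Proof.
move=> d2 p0 q0; have [-> ->] := size_fpair d2 p0 q0.
by case: d d2 => [|[|e]] // _; rewrite /= maxnE; nia.
Qed.

Lemma size_fpair_num (pq : {poly F} * {poly F}) :
  (2 <= d)%nat -> pq.1 != 0 -> pq.2 != 0 ->
  ((size pq.2).-1 < (size pq.1).-1)%nat ->
  (size (fpair pq).1).-1 = ((size pq.1).-1 * d)%nat.
Proof.
move=> d2 p0 q0 lt_qp; have [-> _] := size_fpair d2 p0 q0.
by apply/maxn_idPl; rewrite ltn_mul2r; case: d d2.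
Qed.

Lemma reduced_iter_fpair n (pq : {poly F} * {poly F}) :
  (0 < d)%nat -> reduced_pair pq ->
  reduced_pair (iter n fpair pq).
Proof. by move=> d_gt0 red; elim: n => //= n; apply: reduced_fpair. Qed.

Lemma size_iter_fpair n (pq : {poly F} * {poly F}) :
  (2 <= d)%nat -> reduced_pair pq ->
  (size (iter n.+1 fpair pq).1).-1 = ((size (fpair pq).1).-1 * d ^ n)%nat /\
  ((size (iter n.+1 fpair pq).2).-1 < (size (iter n.+1 fpair pq).1).-1)%nat.
Proof.
move=> d2 red; have d_gt0 : (0 < d)%nat by case: d d2.
elim: n => [|n [IHsize IHlt]].
  have [p0 q0] := reduced_pair_neq0 red.
  by rewrite muln1; split=> //; apply: size_fpair_lt.
have [p0 q0] := reduced_pair_neq0 (reduced_iter_fpair n.+1 d_gt0 red).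
split; last exact: size_fpair_lt.
by rewrite [iter n.+2 _ _]/= size_fpair_num // IHsize expnS mulnCA mulnC.
Qed.

End PairStep.

Lemma fmap_frac d (p q : {poly algC}) : (0 < d)%nat -> p != 0 -> q != 0 ->
  fmap d (polyF p / polyF q) =
    polyF (fpair d (p, q)).1 / polyF (fpair d (p, q)).2.
Proof.
move=> d_gt0 p0 q0; rewrite /fmap /fpair /tvar /polyF /=.
by rewrite !(tofracD, tofracM, tofracXn) fmap_step_div ?tofrac_eq0.
Qed.

Section Iteration.
Variables (d : nat) (A B : {poly algC}).
Hypotheses (d2 : (2 <= d)%nat) (redAB : reduced_pair (A, B)).

Let d_gt0 : (0 < d)%nat. Proof. by case: d d2. Qed.

Lemma iter_fmap_frac n : iter n (fmap d) (polyF A / polyF B) =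
  polyF (iter n (fpair d) (A, B)).1 / polyF (iter n (fpair d) (A, B)).2.
Proof.
elim: n => //= n ->.
have [p0 q0] := reduced_pair_neq0 (reduced_iter_fpair n d_gt0 redAB).
by rewrite fmap_frac // -surjective_pairing.
Qed.

Lemma ratdeg_iter_fmap n : ratdeg (iter n.+1 (fmap d) (polyF A / polyF B)) =
  ((size (fpair d (A, B)).1).-1 * d ^ n)%nat.
Proof.
have /and3P[q0 cpq _] := reduced_iter_fpair n.+1 d_gt0 redAB.
have [<- lt_qp] := size_iter_fpair n d2 redAB.
by rewrite iter_fmap_frac ratdeg_frac //; apply/maxn_idPl/ltnW.
Qed.

End Iteration.

(* Imported only here: it rebinds [^] on [nat] to [Nat.pow] (the power used
   in [hseq]) and shadows the [field] tactic used above. *)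
From Stdlib Require Import Reals.

Lemma Un_cv_eventually_const (u : nat -> R) (l : R) :
  (forall n, u (S n) = l) -> Un_cv u l.
Proof.
move=> ul eps eps_gt0; exists 1%nat => [[|n]] n_ge1; first by inversion n_ge1.
by rewrite ul /R_dist Rminus_diag Rabs_R0.
Qed.

Lemma Nat_pow_expn (m n : nat) : Nat.pow m n = expn m n.
Proof. by elim: n => //= n ->; rewrite expnS. Qed.

Theorem proposition3p1 (d : nat) (A B : {poly algC}) :
  (2 <= d)%nat -> B != 0 -> coprimep A B -> A.[0] != 0 ->
  let c : ratfun := polyF A / polyF B in
  Un_cv (hseq d c) (INR (ratdeg (fmap d c)) / INR d)%R /\
  (INR (ratdeg (fmap d c)) / INR d =
     INR (ratdeg (iter 2 (fmap d) c)) / INR (d ^ 2))%R.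
Proof.
move=> d2 B0 cAB A00 c.
have redAB : reduced_pair (A, B) by rewrite /reduced_pair B0 cAB A00.
have deg_iter n := ratdeg_iter_fmap d2 redAB n.
have d_gt0 : (0 < d)%nat by apply: leq_trans d2.
have d_neq0 : INR d <> 0%R by apply/not_0_INR/eqP; rewrite -lt0n.
have hseq_const n : hseq d c n.+1 = (INR (ratdeg (fmap d c)) / INR d)%R.
  have dn_neq0 : INR (expn d n) <> 0%R.
    by apply/not_0_INR/eqP; rewrite -lt0n expn_gt0 d_gt0.
  rewrite /hseq (deg_iter n) (deg_iter 0) Nat_pow_expn expnS muln1 mulnC.
  by rewrite -!multE !mult_INR Rdiv_mult_l_r.
split; first exact: Un_cv_eventually_const.
by rewrite -(hseq_const 1%nat).
Qed.
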